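(* If $n\ge 3t+1$, then in every execution of COOL there is a value $\boldsymbol M\ne\phi$ such that, at the end of Phase 3, the updated message $\boldsymbol w^{(i)}$ of every honest processor $i$ belongs to $\{\boldsymbol M,\phi\}$; that is, at most one group of honest processors holds a common non-empty updated message, and all other honest processors hold the empty updated message $\phi$.
   Context: Setting. $n$ processors indexed by $[1:n]$, pairwise joined by reliable private synchronous channels; recipients know senders. At most $t$ processors are dishonest, controlled by a Byzantine adversary of unbounded computational power knowing all inputs, who may make them deviate arbitrarily (missing values are replaced by a fixed default); the others are honest. Processor $i$ holds an $\ell$-bit initial message $\boldsymbol w_i$. $\phi$ is a default value different from every $\ell$-bit message. Logarithms are base 2. Code. $k=\lfloor t/5\rfloor+1$, $c=\lceil \max\{\ell,(t/5+1)\log(n+1)\}/k\rceil$. Messages are zero-padded to $kc$ bits and viewed in $GF(2^c)^k$. Integers in $[1:n]$ are identified with distinct nonzero elements of $GF(2^c)$; $\boldsymbol h_i\in GF(2^c)^k$ has entries $h_{i,j}=\prod_{p\in[1:k],\,p\ne j}\frac{i-p}{j-p}$ (field arithmetic). COOL (honest processor $i$). Initialization: updated message $\boldsymbol w^{(i)}:=\boldsymbol w_i$, $y^{(i)}_j:=\boldsymbol h_j^{\mathsf T}\boldsymbol w_i$ for $j\in[1:n]$, $u_i(i):=1$. Phase 1. (a) Send $(y^{(i)}_j,y^{(i)}_i)$ to each $j\ne i$. (b) For $j\ne i$, link indicator $u_i(j):=1$ if the pair received from $j$ equals $(y^{(i)}_i,y^{(i)}_j)$, else $0$. Success indicator $s_i:=1$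 if $\sum_{j=1}^n u_i(j)\ge n-t$; otherwise $s_i:=0$ and $\boldsymbol w^{(i)}:=\phi$. (c) Send $s_i$ to all; each processor records the indicator received from each $j$ (own for itself) and forms $\mathcal S_1=\{j:s_j=1\}$, $\mathcal S_0=\{j:s_j=0\}$ (views may differ). Phase 2. If $s_i=1$: set $u_i(j):=0$ for all $j\in\mathcal S_0$; if now $\sum_j u_i(j)<n-t$, set $s_i:=0$, $\boldsymbol w^{(i)}:=\phi$, and send $s_i=0$ to all. Everyone overwrites recorded indicators with newly received ones and recomputes $\mathcal S_0,\mathcal S_1$. Phase 3. Repeat Phase 2 once more. Vote $v_i:=1$ if the recorded indicators satisfy $\sum_j s_j\ge 2t+1$, else $0$. Run on the votes a deterministic error-free binary Byzantine agreement protocol for $t<n/3$. If the decision is $0$: set $\boldsymbol w^{(i)}:=\phi$, output $\phi$, stop. Phase 4 (decision 1). If $s_i=0$: replace $y^{(i)}_i$ by the most frequent first component of the Phase-1 pairs received from $j\in\mathcal S_1$; send it to each $j\in\mathcal S_0\setminus\{i\}$; decode from $z_1,\dots,z_n$ ($z_i=y^{(i)}_i$; Phase-4 values for $j\in\mathcal S_0$; second components of Phase-1 pairs for $j\in\mathcal S_1$) a message $\boldsymbol x$ with $\boldsymbol h_j^{\mathsf T}\boldsymbol x=z_j$ for at least $n-t$ indices, and set $\boldsymbol w^{(i)}:=\boldsymbol x$. If $s_i=1$ keep $\boldsymbol w^{(i)}$. Output $\boldsymbol w^{(i)}$. *)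

From mathcomp Require Import all_boot all_order all_algebra.
Set Implicit Arguments. Unset Strict Implicit. Unset Printing Implicit Defensive.
Import GRing.Theory.
Local Open Scope ring_scope.

Definition cool_k (t : nat) : nat := (t %/ 5 + 1)%N.

(* c = ceil( max{l, (t/5+1) log2(n+1)} / k ) is the least natural c with
   k*c >= l and k*c >= ((t+5)/5) log2(n+1), i.e. (n+1)^(t+5) <= 2^(5kc). *)
Definition cool_c_ok (n t l c : nat) : bool :=
  (l <= cool_k t * c)%N && ((n.+1) ^ (t + 5) <= 2 ^ (5 * cool_k t * c))%N.
Definition is_cool_c (n t l c : nat) : bool :=
  cool_c_ok n t l c && [forall c' : 'I_c, ~~ cool_c_ok n t l c'].

(* h_{i,j} = prod_{p in [1:k], p<>j} (i-p)/(j-p), integers identified with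
   field elements via alpha. i, j are the (1-based) integers. *)
Definition hcoef (F : fieldType) (alpha : nat -> F) (k i j : nat) : F :=
  \prod_(p < k | p.+1 != j) ((alpha i - alpha p.+1) / (alpha j - alpha p.+1)).

Definition hdot (F : fieldType) (alpha : nat -> F) (k : nat) (x : 'I_k -> F)
  (j : nat) : F := \sum_(p < k) hcoef alpha k j p.+1 * x p.

(* zero-padding of an l-bit message to kc bits and splitting into k blocks
   of c bits, each block identified with a field element via ident *)
Definition enc (F : fieldType) (l k c : nat) (ident : {ffun 'I_c -> bool} -> F)
  (w : l.-tuple bool) : 'I_k -> F :=
  fun p => ident [ffun r : 'I_c => nth false w (p * c + r)].

(* ---- One execution of COOL, Phases 1-3.  Processor i : 'I_n is the
   integer i+1.  H = set of honest processors.  Adversary choices: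
   adv1 j i  : pair sent in Phase 1(a) by dishonest j to i,
   advs1 j i : indicator sent in Phase 1(c) by dishonest j to i,
   advs2 j i, advs3 j i : indicator (possibly nothing = None) sent by
               dishonest j to i in Phase 2 resp. Phase 3. *)

Definition yv (F : fieldType) (alpha : nat -> F) (l k c n : nat)
  (ident : {ffun 'I_c -> bool} -> F) (winit : 'I_n -> l.-tuple bool)
  (i j : 'I_n) : F :=
  @hdot F alpha k (@enc F l k c ident (winit i)) j.+1.

Definition u1 (F : fieldType) (n : nat) (H : {set 'I_n})
  (y : 'I_n -> 'I_n -> F) (adv1 : 'I_n -> 'I_n -> F * F) (i j : 'I_n) : bool :=
  let recv := if j \in H then (y j i, y j j) else adv1 j i in
  (j == i) || (recv == (y i i, y i j)).

Definition s_of (n t : nat) (u : 'I_n -> 'I_n -> bool) (i : 'I_n) : bool :=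
  (n - t <= #|[pred j | u i j]|)%N.

Definition view1 (n : nat) (H : {set 'I_n}) (s : 'I_n -> bool)
  (advs1 : 'I_n -> 'I_n -> bool) (i j : 'I_n) : bool :=
  if j == i then s i else if j \in H then s j else advs1 j i.

Definition step_u (n : nat) (u : 'I_n -> 'I_n -> bool)
  (view : 'I_n -> 'I_n -> bool) (i j : 'I_n) : bool :=
  u i j && view i j.

Definition step_s (n t : nat) (u : 'I_n -> 'I_n -> bool) (s : 'I_n -> bool)
  (view : 'I_n -> 'I_n -> bool) (i : 'I_n) : bool :=
  s i && @s_of n t (@step_u n u view) i.

Definition step_view (n t : nat) (H : {set 'I_n}) (u : 'I_n -> 'I_n -> bool)
  (s : 'I_n -> bool) (view : 'I_n -> 'I_n -> bool)
  (adv : 'I_n -> 'I_n -> option bool) (i j : 'I_n) : bool :=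
  let s' := @step_s n t u s view in
  if j == i then s' i
  else if j \in H then (if s j && ~~ s' j then false else view i j)
  else (if adv j i is Some b then b else view i j).

(* updated message of processor i at the end of Phase 3; d = decision of the
   binary Byzantine agreement (common to all honest processors).
   None stands for phi. *)
Definition cool_w3 (F : fieldType) (alpha : nat -> F) (n t l c : nat)
  (ident : {ffun 'I_c -> bool} -> F) (H : {set 'I_n})
  (winit : 'I_n -> l.-tuple bool) (adv1 : 'I_n -> 'I_n -> F * F)
  (advs1 : 'I_n -> 'I_n -> bool) (advs2 advs3 : 'I_n -> 'I_n -> option bool)
  (d : bool) (i : 'I_n) : option (l.-tuple bool) :=
  let y := @yv F alpha l (cool_k t) c n ident winit in
  let u1 := @u1 F n H y adv1 in
  let s1 := @s_of n t u1 in
  let v1 := @view1 n H s1 advs1 in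
  let u2 := @step_u n u1 v1 in
  let s2 := @step_s n t u1 s1 v1 in
  let v2 := @step_view n t H u1 s1 v1 advs2 in
  let s3 := @step_s n t u2 s2 v2 in
  if d && s3 i then Some (winit i) else None.

From mathcomp Require Import all_boot all_order all_algebra.
From mathcomp Require Import zify.
Set Implicit Arguments. Unset Strict Implicit. Unset Printing Implicit Defensive.
Import GRing.Theory.

(* Messages are encoded by a Reed-Solomon code of dimension k = t/5 + 1, so the
   codewords of two distinct messages agree in fewer than k positions.  Write f
   for the number of dishonest processors and q = n - t - f.  An honest
   processor that succeeds in Phase 1 is linked to at least q honest processors,
   and the own symbol of each of them equals the corresponding symbol of its
   codeword.  Three such agreement sets for distinct messages cannot fit among
   the n - f honest processors (inclusion-exclusion), so at most two messages
   survive Phase 1.  Phases 2 and 3 then force a processor still successful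
   after Phase 3 to be backed by q honest processors holding its own message,
   and two distinct such messages would need 2q > n - f honest processors. *)

Section ReedSolomon.
Local Open Scope ring_scope.

Variables (F : fieldType) (alpha : nat -> F) (k : nat).

Definition lagrange_poly (q : 'I_k) : {poly F} :=
  \prod_(p < k | p != q) ((alpha q.+1 - alpha p.+1)^-1 *: ('X - (alpha p.+1)%:P)).

Definition code_poly (x : 'I_k -> F) : {poly F} := \sum_(q < k) x q *: lagrange_poly q.

Lemma hdotE (x : 'I_k -> F) (j : nat) : hdot alpha x j = (code_poly x).[alpha j].
Proof.
rewrite /hdot /code_poly horner_sum; apply: eq_bigr => q _.
rewrite hornerZ horner_prod mulrC /hcoef (eq_bigl (fun p => p != q)) => [|p]; last by rewrite eqSS.
by congr (_ * _); apply: eq_bigr => p _; rewrite hornerZ hornerXsubC mulrC.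
Qed.

Lemma size_lagrange_poly (q : 'I_k) : (size (lagrange_poly q) <= k)%N.
Proof.
have cardq : #|predC1 q|.+1 = k.
  by rewrite cardC1 card_ord prednK // (leq_ltn_trans _ (ltn_ord q)).
apply: leq_trans (size_poly_prod_leq _ _) _.
rewrite [#|_|](_ : _ = #|predC1 q|) // -[leqRHS]cardq leq_subLR addnS ltnS addnn -muln2.
rewrite -sum_nat_const; apply: leq_sum => p _.
by apply: leq_trans (size_scale_leq _ _) _; rewrite size_XsubC.
Qed.

Lemma size_code_poly (x : 'I_k -> F) : (size (code_poly x) <= k)%N.
Proof.
apply: leq_trans (size_sum _ _ _) _; apply/bigmax_leqP => p _.
exact: leq_trans (size_scale_leq _ _) (size_lagrange_poly p).
Qed.

Variable n : nat.
Hypothesis k_le_n : (k <= n)%N.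
Hypothesis alpha_inj : {in [pred m | 0 < m <= n]%N &, injective alpha}.

Lemma alpha_node_inj (p q : 'I_n) : alpha p.+1 = alpha q.+1 -> p = q.
Proof. by move=> e; apply/val_inj/eq_add_S/(alpha_inj _ _ e); rewrite inE /=. Qed.

Lemma hdot_node (x : 'I_k -> F) (q : 'I_k) : hdot alpha x q.+1 = x q.
Proof.
have node_inj (p r : 'I_k) : alpha p.+1 = alpha r.+1 -> p = r.
  move=> /(@alpha_node_inj (widen_ord k_le_n p) (widen_ord k_le_n r)) e.
  exact/val_inj/(congr1 val e).
rewrite /hdot (bigD1 q) //= big1 ?addr0.
  rewrite /hcoef big1 ?mul1r // => r rq; rewrite divff // subr_eq0.
  by apply: contra rq => /eqP/node_inj ->.
move=> p pq; rewrite /hcoef (bigD1 q) /=; last by rewrite eqSS eq_sym.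
by rewrite subrr !mul0r.
Qed.

Lemma hdot_eq_on_nodes (x x' : 'I_k -> F) (S : {set 'I_n}) :
  (k <= #|S|)%N -> {in S, forall p : 'I_n, hdot alpha x p.+1 = hdot alpha x' p.+1} ->
  x =1 x'.
Proof.
move=> kS eqS.
have eq_poly : code_poly x - code_poly x' = 0.
  pose rs := [seq alpha (val p).+1 | p <- enum S].
  apply: (roots_geq_poly_eq0 (rs := rs)).
  - apply/allP => a /mapP[p]; rewrite mem_enum => pS ->.
    by rewrite /root hornerD hornerN -!hdotE eqS ?subrr.
  - by rewrite map_inj_uniq ?enum_uniq // => p r /alpha_node_inj.
  - rewrite size_map -cardE; apply: leq_trans kS.
    by apply: leq_trans (size_polyD _ _) _; rewrite size_polyN geq_max !size_code_poly.
by move=> q; rewrite -hdot_node -[RHS]hdot_node !hdotE; move/subr0_eq: eq_poly => ->.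
Qed.

End ReedSolomon.

Lemma enc_inj (F : fieldType) (l k c : nat) (ident : {ffun 'I_c -> bool} -> F)
    (a b : l.-tuple bool) :
  injective ident -> l <= k * c -> @enc F l k c ident a =1 @enc F l k c ident b -> a = b.
Proof.
move=> ident_inj lkc eq_ab; apply/val_inj/(@eq_from_nth _ false); rewrite !size_tuple //.
move=> r rl; have c_gt0 : 0 < c by case: c {ident ident_inj eq_ab} lkc; lia.
have block_lt : r %/ c < k by rewrite ltn_divLR //; lia.
have := eq_ab (Ordinal block_lt); rewrite /enc => /ident_inj /ffunP.
by move=> /(_ (Ordinal (ltn_pmod r c_gt0))); rewrite !ffunE /= -divn_eq.
Qed.

Definition codeword (F : fieldType) (alpha : nat -> F) (n l k c : nat)
    (ident : {ffun 'I_c -> bool} -> F) (a : l.-tuple bool) (p : 'I_n) : F :=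
  hdot alpha (@enc F l k c ident a) p.+1.

Lemma card_codeword_agree_lt (F : fieldType) (alpha : nat -> F) (n l k c : nat)
    (ident : {ffun 'I_c -> bool} -> F) (a b : l.-tuple bool) :
  injective ident -> l <= k * c -> k <= n ->
  {in [pred m | 0 < m <= n] &, injective alpha} -> a != b ->
  #|[set p : 'I_n | codeword alpha k ident a p == codeword alpha k ident b p]| < k.
Proof.
move=> ident_inj lkc kn alpha_inj; apply: contraNT; rewrite -leqNgt => kS.
apply/eqP/(enc_inj ident_inj lkc)/(hdot_eq_on_nodes kn alpha_inj kS).
by move=> p; rewrite inE => /eqP.
Qed.

Lemma bonferroni_setU3 (T : finType) (A B C : {set T}) :
  #|A| + #|B| + #|C| <= #|A :|: B :|: C| + #|A :&: B| + #|A :&: C| + #|B :&: C|.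
Proof.
have AB := cardsU A B; have ABC := cardsU (A :|: B) C.
rewrite setIUl in ABC; have ACBC := cardsU (A :&: C) (B :&: C).
have le_AB : #|A :&: B| <= #|A| by apply/subset_leq_card/subsetIl.
have le_ACBC : #|A :&: C :|: B :&: C| <= #|C|.
  by apply/subset_leq_card; rewrite -setIUl subsetIr.
have le_ABC : #|A :&: C :&: (B :&: C)| <= #|A :&: C| by apply/subset_leq_card/subsetIl.
lia.
Qed.

Section Agreement.

Variables (n t k : nat) (T V : eqType) (code : T -> 'I_n -> V).
Variables (H : {set 'I_n}) (w : 'I_n -> T) (u : rel 'I_n) (s1 s2 s3 : pred 'I_n).

Let f := #|~: H|.
Let q := n - t - f.

Hypothesis n_gt3t : 3 * t + 1 <= n.
Hypothesis f_le_t : #|~: H| <= t.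
Hypothesis k_small : k <= t %/ 5 + 1.
Hypothesis code_sep : forall a b, a != b -> #|[set p | code a p == code b p]| < k.
Hypothesis link_consistent : {in H &, forall j m, u j m ->
  code (w m) j = code (w j) j /\ code (w j) m = code (w m) m}.
Hypothesis s1_quorum : {in H, forall j, s1 j -> q <= #|[set m in H | u j m]|}.
Hypothesis s2_quorum : {in H, forall j, s2 j ->
  s1 j /\ q <= #|[set m in H | u j m && s1 m]|}.
Hypothesis s3_quorum : {in H, forall j, s3 j ->
  s2 j /\ q <= #|[set m in H | u j m && s2 m]|}.

Let card_H : #|H| + f = n.
Proof. by rewrite /f cardsC card_ord. Qed.

Let k_le_q : k <= q.
Proof. rewrite /q /f; lia. Qed.

Definition agree (a : T) : {set 'I_n} := [set p in H | code a p == code (w p) p].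

Lemma agree_sub a : agree a \subset H.
Proof. by apply/subsetP => p; rewrite inE => /andP[]. Qed.

Lemma card_agreeI a b : a != b -> #|agree a :&: agree b| < k.
Proof.
move=> ab; apply: leq_ltn_trans (code_sep ab); apply/subset_leq_card/subsetP => p.
by rewrite !inE => /andP[/andP[_ /eqP ->] /andP[_ /eqP ->]].
Qed.

Lemma s1_card_agree j : j \in H -> s1 j -> q <= #|agree (w j)|.
Proof.
move=> hj /(s1_quorum hj) /leq_trans; apply; apply/subset_leq_card/subsetP => m.
by rewrite !inE => /andP[hm /(link_consistent hj hm)[_ ->]]; rewrite hm eqxx.
Qed.

Lemma s1_two_messages i i' m : i \in H -> i' \in H -> m \in H ->
  s1 i -> s1 i' -> s1 m -> w i != w i' -> w m = w i \/ w m = w i'.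
Proof.
move=> hi hi' hm si si' sm ii'.
case: (eqVneq (w m) (w i)) => [|mi]; first by left.
case: (eqVneq (w m) (w i')) => [|mi']; first by right.
have := bonferroni_setU3 (agree (w i)) (agree (w i')) (agree (w m)).
have : #|agree (w i) :|: agree (w i') :|: agree (w m)| <= #|H|.
  by apply/subset_leq_card; rewrite !subUset !agree_sub.
have := s1_card_agree hi si; have := s1_card_agree hi' si'; have := s1_card_agree hm sm.
have := card_agreeI ii'; have := card_agreeI mi; have := card_agreeI mi'.
rewrite ![agree (w m) :&: _]setIC /q; move: card_H f_le_t; rewrite /f; lia.
Qed.

Lemma s3_supporters i b : i \in H -> s3 i -> w i != b ->
    {in H, forall m, s1 m -> w m = w i \/ w m = b} ->
  q <= #|[set m in H | w m == w i]|.
Proof.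
move=> hi si ib two; have [s2i quorum_i] := s3_quorum hi si.
have : ~~ ([set m in H | u i m && s2 m] \subset [set p | code (w i) p == code b p]).
  apply: contraTN (code_sep ib) => /subset_leq_card sub; rewrite -leqNgt.
  exact: leq_trans k_le_q (leq_trans quorum_i sub).
case/subsetPn => j; rewrite !inE => /and3P[hj uij s2j] jZ.
have [s1j quorum_j] := s2_quorum hj s2j.
have wj : w j = w i.
  have [_ e] := link_consistent hi hj uij.
  by case: (two j hj s1j) => // wjb; move: jZ; rewrite e wjb eqxx.
apply: leq_trans quorum_j _; apply/subset_leq_card/subsetP => m.
rewrite !inE => /and3P[hm ujm s1m]; rewrite hm /=.
case: (two m hm s1m) => [-> // | wmb].
have [e _] := link_consistent hj hm ujm.
by move: jZ; rewrite -wj -e wmb eqxx.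
Qed.

Lemma s3_same_message : {in H &, forall i i', s3 i -> s3 i' -> w i = w i'}.
Proof.
move=> i i' hi hi' si si'; apply/eqP/contraT => ii'.
have s1_of_s3 j : j \in H -> s3 j -> s1 j.
  by move=> hj /(s3_quorum hj)[/(s2_quorum hj)[]].
have two m : m \in H -> s1 m -> w m = w i \/ w m = w i'.
  by move=> hm /(s1_two_messages hi hi' hm (s1_of_s3 _ hi si) (s1_of_s3 _ hi' si')); apply.
have sup := s3_supporters hi si ii' two.
have sup' : q <= #|[set m in H | w m == w i']|.
  apply: (s3_supporters (b := w i) hi' si'); first by rewrite eq_sym.
  by move=> m hm /(two m hm) []; [right | left].
have disj : [set m in H | w m == w i] :&: [set m in H | w m == w i'] = set0.
  apply/setP => m; rewrite !inE; apply/negP => /andP[/andP[_ /eqP e] /andP[_ /eqP e']].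
  by move: ii'; rewrite -e e' eqxx.
have : #|[set m in H | w m == w i] :|: [set m in H | w m == w i']| <= #|H|.
  by apply/subset_leq_card; rewrite subUset; apply/andP; split; apply/subsetP => m;
     rewrite inE => /andP[].
rewrite cardsU disj cards0 subn0; move: sup sup' card_H f_le_t; rewrite /q /f; lia.
Qed.

End Agreement.

Lemma u1_consistent (F : fieldType) (n : nat) (H : {set 'I_n}) (y : 'I_n -> 'I_n -> F)
    (adv1 : 'I_n -> 'I_n -> F * F) :
  {in H &, forall j m, u1 H y adv1 j m -> y m j = y j j /\ y j m = y m m}.
Proof. by move=> j m _ hm; rewrite /u1 hm; case: eqP => [-> //|_ /eqP[-> ->]]. Qed.

Lemma s_of_quorum (n t : nat) (H : {set 'I_n}) (u : 'I_n -> 'I_n -> bool) j (P : pred 'I_n) :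
  {in H, forall m, u j m -> P m} -> s_of t u j -> n - t - #|~: H| <= #|[set m in H | P m]|.
Proof.
move=> uP; rewrite /s_of => quorum.
have : #|[pred m | u j m]| <= #|[set m in H | P m] :|: ~: H|.
  apply/subset_leq_card/subsetP => m; rewrite !inE /=.
  by case: (boolP (m \in H)) => hm; rewrite ?orbF ?orbT // => /(uP m hm) ->.
rewrite cardsU; lia.
Qed.

Lemma step_s_quorum (n t : nat) (H : {set 'I_n}) (u : 'I_n -> 'I_n -> bool) (s : 'I_n -> bool)
    (view : 'I_n -> 'I_n -> bool) j (P : pred 'I_n) :
  {in H, forall m, step_u u view j m -> P m} -> step_s t u s view j ->
  s j /\ n - t - #|~: H| <= #|[set m in H | P m]|.
Proof. by move=> uP /andP[sj /(s_of_quorum uP)]; split. Qed.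

Lemma view1_honest (n : nat) (H : {set 'I_n}) (s : 'I_n -> bool) (advs1 : 'I_n -> 'I_n -> bool) i :
  {in H, forall m, view1 H s advs1 i m = s m}.
Proof. by move=> m hm; rewrite /view1 hm; case: eqP => [->|]. Qed.

Lemma step_view_honest (n t : nat) (H : {set 'I_n}) (u : 'I_n -> 'I_n -> bool)
    (s : 'I_n -> bool) (view : 'I_n -> 'I_n -> bool) (adv : 'I_n -> 'I_n -> option bool) i :
  {in H, forall m, view i m = s m} ->
  {in H, forall m, step_view t H u s view adv i m = step_s t u s view m}.
Proof.
move=> view_s m hm; rewrite /step_view hm view_s //.
by case: eqP => [-> //|_]; rewrite /step_s; case: (s m); case: s_of.
Qed.

Theorem lemma3 (n t l c : nat) (F : finFieldType) (alpha : nat -> F)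
  (ident : {ffun 'I_c -> bool} -> F) (H : {set 'I_n})
  (winit : 'I_n -> l.-tuple bool) (adv1 : 'I_n -> 'I_n -> F * F)
  (advs1 : 'I_n -> 'I_n -> bool) (advs2 advs3 : 'I_n -> 'I_n -> option bool)
  (d : bool) :
  (3 * t + 1 <= n)%N ->
  (#|~: H| <= t)%N ->
  is_cool_c n t l c ->
  #|F| = (2 ^ c)%N ->
  bijective ident ->
  {in [pred m | (0 < m <= n)%N] &, injective alpha} ->
  (forall m, (0 < m <= n)%N -> alpha m != 0%R) ->
  exists M : l.-tuple bool, forall i, i \in H ->
    cool_w3 alpha t ident H winit adv1 advs1 advs2 advs3 d i = None \/
    cool_w3 alpha t ident H winit adv1 advs1 advs2 advs3 d i = Some M.
Proof.
move=> n_gt3t f_le_t c_ok _ /bij_inj ident_inj alpha_inj _.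
set k := cool_k t.
have lkc : l <= k * c by case/andP: c_ok => /andP[].
have kn : k <= n by rewrite /k /cool_k; lia.
set u := u1 H (yv alpha k ident winit) adv1.
set s1 := s_of t u; set v1 := view1 H s1 advs1.
set s2 := step_s t u s1 v1; set v2 := step_view t H u s1 v1 advs2.
set s3 := step_s t (step_u u v1) s2 v2.
have w3E i : cool_w3 alpha t ident H winit adv1 advs1 advs2 advs3 d i =
  if d && s3 i then Some (winit i) else None by [].
have same : {in H &, forall i i', s3 i -> s3 i' -> winit i = winit i'}.
  apply: (s3_same_message (t := t) (k := k) (code := codeword alpha k ident) (u := u) (s1 := s1)
    (s2 := s2)) => //.
  - by move=> a b; apply: card_codeword_agree_lt.
  - exact: u1_consistent.
  - by move=> j _; apply: s_of_quorum.
  - by move=> j _; apply: step_s_quorum => m hm; rewrite /step_u /v1 view1_honest.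
  - move=> j _; apply: step_s_quorum => m hm.
    rewrite /step_u /v2 /v1 view1_honest // step_view_honest //; last exact: view1_honest.
    by case/andP => /andP[-> _].
case: (pickP [pred i | (i \in H) && s3 i]) => [i0 /andP[hi0 si0] | none].
  exists (winit i0) => i hi; rewrite w3E.
  by case: ifP => [/andP[_ si] | _]; [right; rewrite (same i i0) | left].
exists (nseq_tuple l false) => i hi; left.
by rewrite w3E; move: (none i); rewrite /= hi => /= ->; rewrite andbF.
Qed.
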